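(* In objective type theory (defined in the context below), every derivable judgement (of any of the forms $\vdash \Gamma\ \mathrm{Ctxt}$, $\Gamma \vdash \sigma \in \mathrm{Type}$, $\Gamma \vdash a \in \sigma$) has a unique derivation.
   Context: Objective type theory is the following formal system. It has three judgement forms: $\vdash \Gamma\ \mathrm{Ctxt}$, $\Gamma \vdash \sigma \in \mathrm{Type}$, $\Gamma \vdash a \in \sigma$, where a context is a list $[x_1 \in \sigma_1, \ldots, x_n \in \sigma_n]$ of distinct variables with types. Expressions are considered up to $\alpha$-equivalence (e.g. via de Bruijn indices), and $\equiv$ denotes this syntactic equality; $[t/x]$ denotes capture-avoiding substitution and $[x_1,\ldots,x_n]t$ denotes binding of the $x_i$ in $t$. There is NO definitional (judgemental) equality and no conversion rule. The rules are exactly: $\vdash []\ \mathrm{Ctxt}$; from $\vdash \Gamma\ \mathrm{Ctxt}$, $\Gamma \vdash \sigma \in \mathrm{Type}$ and $x$ fresh infer $\vdash [\Gamma, x \in \sigma]\ \mathrm{Ctxt}$; from $\vdash [\Gamma, x\in\sigma, \Delta]\ \mathrm{Ctxt}$ infer $\Gamma, x \in \sigma, \Delta \vdash x \in \sigma$. $\Pi$-types: from $\Gamma \vdash A \in \mathrm{Type}$ and $\Gamma, x\in A \vdash B \in \mathrm{Type}$ infer $\Gamma \vdash \Pi(A,[x]B) \in \mathrm{Type}$; from $\Gamma, x \in A \vdash t \in B$ infer $\Gamma \vdash \lambda(A,[x]B,[x]t) \in \Pi(A,[x]B)$; from $\Gamma \vdash f \in \Pi(A,[x]B)$ and $\Gamma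 \vdash a \in A$ infer $\Gamma \vdash \mathbf{app}(A,[x]B,f,a) \in B[a/x]$; from $\Gamma, x\in A \vdash t \in B$ and $\Gamma \vdash a \in A$ infer $\Gamma \vdash \mathbf{betaconv}(A,[x]B,a,[x]t) \in \mathbf{app}(A,[x]B,\lambda(A,[x]B,[x]t),a) =_{B[a/x]} t[a/x]$. Identity types: from $\Gamma \vdash a \in A$ and $\Gamma \vdash b \in A$ infer $\Gamma \vdash a =_A b \in \mathrm{Type}$; from $\Gamma \vdash a \in A$ infer $\Gamma \vdash \mathbf{refl}(A,a) \in a =_A a$; from $\Gamma, x\in A, y \in A, u \in x =_A y \vdash P \in \mathrm{Type}$, $\Gamma \vdash p \in a =_A b$ and $\Gamma, x \in A \vdash d \in P[x,x,\mathbf{refl}(A,x)/x,y,u]$ infer $\Gamma \vdash \mathbf{idrec}(A,[x,y,u]P,a,b,p,[x]d) \in P[a,b,p/x,y,u]$; from $\Gamma, x\in A, y \in A, u \in x =_A y \vdash P \in \mathrm{Type}$, $\Gamma \vdash a \in A$ and $\Gamma, x \in A \vdash d \in P[x,x,\mathbf{refl}(A,x)/x,y,u]$ infer $\Gamma \vdash \mathbf{idconv}(A,[x,y,u]P,a,[x]d) \in \mathbf{idrec}(A,[x,y,u]P,a,a,\mathbf{refl}(A,a),[x]d) =_{P[a,a,\mathbf{refl}(A,a)/x,y,u]} d[a/x]$. *)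

From Stdlib Require Import List.
Import ListNotations.

(* Binders:
   Pi A [x]B        : B binds 1
   lam A [x]B [x]t  : B, t bind 1
   app A [x]B f a   : B binds 1
   betaconv A [x]B a [x]t : B, t bind 1
   Id A a b         : no binders   (a =_A b)
   refl A a
   idrec A [x,y,u]P a b p [x]d : P binds 3 (u = 0, y = 1, x = 2), d binds 1
   idconv A [x,y,u]P a [x]d    : idem *)
Inductive expr : Type :=
| var (n : nat)
| Pi (A B : expr)
| lam (A B t : expr)
| app (A B f a : expr)
| betaconv (A B a t : expr)
| Id (A a b : expr)
| refl (A a : expr)
| idrec (A P a b p d : expr)
| idconv (A P a d : expr).

Definition upren (r : nat -> nat) : nat -> nat :=
  fun n => match n with 0 => 0 | S m => S (r m) end.

Fixpoint ren (r : nat -> nat) (e : expr) : expr :=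
  match e with
  | var n => var (r n)
  | Pi A B => Pi (ren r A) (ren (upren r) B)
  | lam A B t => lam (ren r A) (ren (upren r) B) (ren (upren r) t)
  | app A B f a => app (ren r A) (ren (upren r) B) (ren r f) (ren r a)
  | betaconv A B a t =>
      betaconv (ren r A) (ren (upren r) B) (ren r a) (ren (upren r) t)
  | Id A a b => Id (ren r A) (ren r a) (ren r b)
  | refl A a => refl (ren r A) (ren r a)
  | idrec A P a b p d =>
      idrec (ren r A) (ren (upren (upren (upren r))) P) (ren r a) (ren r b)
            (ren r p) (ren (upren r) d)
  | idconv A P a d =>
      idconv (ren r A) (ren (upren (upren (upren r))) P) (ren r a)
             (ren (upren r) d)
  end.

Definition up (s : nat -> expr) : nat -> expr :=
  fun n => match n with 0 => var 0 | S m => ren S (s m) end.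

Fixpoint subst (s : nat -> expr) (e : expr) : expr :=
  match e with
  | var n => s n
  | Pi A B => Pi (subst s A) (subst (up s) B)
  | lam A B t => lam (subst s A) (subst (up s) B) (subst (up s) t)
  | app A B f a => app (subst s A) (subst (up s) B) (subst s f) (subst s a)
  | betaconv A B a t =>
      betaconv (subst s A) (subst (up s) B) (subst s a) (subst (up s) t)
  | Id A a b => Id (subst s A) (subst s a) (subst s b)
  | refl A a => refl (subst s A) (subst s a)
  | idrec A P a b p d =>
      idrec (subst s A) (subst (up (up (up s))) P) (subst s a) (subst s b)
            (subst s p) (subst (up s) d)
  | idconv A P a d =>
      idconv (subst s A) (subst (up (up (up s))) P) (subst s a)
             (subst (up s) d)
  end.

Definition scons (a : expr) (s : nat -> expr) : nat -> expr :=
  fun n => match n with 0 => a | S m => s m end.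

Definition inst1 (B a : expr) : expr := subst (scons a var) B.

(* P[a,b,p/x,y,u] for P with bound x,y,u (u innermost) *)
Definition inst3 (P a b p : expr) : expr :=
  subst (scons p (scons b (scons a var))) P.

(* P[x,x,refl(A,x)/x,y,u], living in context Γ, x ∈ A *)
Definition inst_refl (A P : expr) : expr :=
  subst (scons (refl (ren S A) (var 0))
          (scons (var 0) (scons (var 0) (fun n => var (S n))))) P.

(* Contexts: the head of the list is the LAST (innermost) declaration,
   i.e. [Γ, x ∈ σ] is represented by (σ :: Γ). Freshness of variables is
   automatic with de Bruijn indices. *)
Definition ctxt := list expr.

Inductive judgement : Type :=
| JCtxt (G : ctxt)
| JType (G : ctxt) (A : expr)
| JElem (G : ctxt) (a A : expr).

(* Derivations (proof-relevant, in Type). No conversion rule. *)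
Inductive deriv : judgement -> Type :=
| d_nil : deriv (JCtxt [])
| d_ext : forall G A,
    deriv (JCtxt G) -> deriv (JType G A) -> deriv (JCtxt (A :: G))
| d_var : forall (D : ctxt) (s : expr) (G : ctxt),
    deriv (JCtxt (D ++ s :: G)) ->
    deriv (JElem (D ++ s :: G) (var (length D))
                 (ren (fun n => n + S (length D)) s))
| d_Pi : forall G A B,
    deriv (JType G A) -> deriv (JType (A :: G) B) -> deriv (JType G (Pi A B))
| d_lam : forall G A B t,
    deriv (JElem (A :: G) t B) -> deriv (JElem G (lam A B t) (Pi A B))
| d_app : forall G A B f a,
    deriv (JElem G f (Pi A B)) -> deriv (JElem G a A) ->
    deriv (JElem G (app A B f a) (inst1 B a))
| d_beta : forall G A B t a,
    deriv (JElem (A :: G) t B) -> deriv (JElem G a A) ->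
    deriv (JElem G (betaconv A B a t)
             (Id (inst1 B a) (app A B (lam A B t) a) (inst1 t a)))
| d_Id : forall G A a b,
    deriv (JElem G a A) -> deriv (JElem G b A) -> deriv (JType G (Id A a b))
| d_refl : forall G A a,
    deriv (JElem G a A) -> deriv (JElem G (refl A a) (Id A a a))
| d_idrec : forall G A P a b p d,
    deriv (JType (Id (ren (fun n => n + 2) A) (var 1) (var 0)
                    :: ren S A :: A :: G) P) ->
    deriv (JElem G p (Id A a b)) ->
    deriv (JElem (A :: G) d (inst_refl A P)) ->
    deriv (JElem G (idrec A P a b p d) (inst3 P a b p))
| d_idconv : forall G A P a d,
    deriv (JType (Id (ren (fun n => n + 2) A) (var 1) (var 0)
                    :: ren S A :: A :: G) P) ->
    deriv (JElem G a A) ->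
    deriv (JElem (A :: G) d (inst_refl A P)) ->
    deriv (JElem G (idconv A P a d)
             (Id (inst3 P a a (refl A a)) (idrec A P a a (refl A a) d)
                 (inst1 d a))).

(* Objective type theory is syntax-directed: the form of a judgement and the
   head constructor of its subject (of its context, for [⊢ Γ Ctxt]) fix the
   last rule of any derivation, and since terms carry all their annotations
   ([A], [[x]B], [[x,y,u]P]) the premises of that rule are fixed as well.  The
   one rule needing an argument is the variable rule, where the splitting
   [Γ, x ∈ σ, Δ] of the context is recovered from the de Bruijn index [|Δ|].
   Induction on one derivation then shows that every other derivation of the
   same judgement coincides with it.  Judgements have decidable equality, so
   the dependent inversion involved needs no axiom. *)

From Stdlib Require Import List Eqdep_dec.

Lemma app_cons_inj {T : Type} (D1 D2 : list T) (s1 s2 : T) (G1 G2 : list T) :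
  length D1 = length D2 -> D1 ++ s1 :: G1 = D2 ++ s2 :: G2 ->
  D1 = D2 /\ s1 = s2 /\ G1 = G2.
Proof.
  revert D2; induction D1 as [|x D1 IH]; intros [|y D2] Hlen Heq;
    simpl in *; try discriminate.
  - injection Heq; auto.
  - injection Heq as -> Heq.
    destruct (IH D2 (f_equal pred Hlen) Heq) as [-> [-> ->]]; auto.
Qed.

Definition expr_eq_dec (e1 e2 : expr) : {e1 = e2} + {e1 <> e2}.
Proof. decide equality; apply PeanoNat.Nat.eq_dec. Defined.

Definition judgement_eq_dec (J1 J2 : judgement) : {J1 = J2} + {J1 <> J2}.
Proof.
  decide equality; solve [apply expr_eq_dec | apply list_eq_dec, expr_eq_dec].
Defined.

Lemma existT_deriv_inj (J : judgement) (d1 d2 : deriv J) :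
  existT deriv J d1 = existT deriv J d2 -> d1 = d2.
Proof. apply inj_pair2_eq_dec, judgement_eq_dec. Qed.

(* The index is generalised so that [d2] can be destructed without dependent
   pattern matching; [J1 = J2] then forces both derivations to end with the
   same rule applied to the same metavariables. *)
Lemma deriv_unique_dep (J1 : judgement) (d1 : deriv J1)
    (J2 : judgement) (d2 : deriv J2) :
  J1 = J2 -> existT deriv J1 d1 = existT deriv J2 d2.
Proof.
  revert J2 d2.
  induction d1; intros J2 d2 HJ; destruct d2; try discriminate HJ;
    try (injection HJ; intros); subst;
    try match goal with
        | Hlen : length ?D1 = length ?D2,
          Hctx : ?D1 ++ _ :: _ = ?D2 ++ _ :: _ |- _ =>
            destruct (app_cons_inj _ _ _ _ _ _ Hlen Hctx) as [-> [-> ->]]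
        end;
    repeat match goal with
           | IH : forall J2 (d2 : deriv J2), ?J = J2 -> _, d : deriv ?J |- _ =>
               specialize (existT_deriv_inj _ _ _ (IH _ d eq_refl)) as ->;
               clear IH
           end;
    reflexivity.
Qed.

Theorem lemma2p4 : forall (J : judgement) (d1 d2 : deriv J), d1 = d2.
Proof.
  intros J d1 d2.
  apply existT_deriv_inj, deriv_unique_dep; reflexivity.
Qed.
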